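(* Consider the two-sided market model described in the context, and suppose the ISP charges no membership fee to consumers ($c=0$), so that every consumer participates ($x_t=x_0$), and chooses only the CP fee $b$ to maximize its revenue. Then the revenue-maximizing CP fee is $$ b_{opt}=\begin{cases} a, & \text{if } a> \frac{\lambda}{2}\frac{x_0^{2-\gamma}}{\gamma-2},\\[4pt] \frac{\lambda}{\gamma-2}x_0^{2-\gamma}-a, & \text{if } 0\leq a \leq \frac{\lambda}{2}\frac{x_0^{2-\gamma}}{\gamma-2}.\end{cases} $$
   Context: Model (a monopolist ISP between consumers and content providers (CPs)). Fix exponents $\gamma>2$, $\beta>2$. Consumer types $x$ have density $x^{-\gamma}$ on $x\ge x_0:=(\frac{1}{\gamma-1})^{\frac{1}{\gamma-1}}$; CP types $y$ have density $y^{-\beta}$ on $y\ge y_0:=(\frac{1}{\beta-1})^{\frac{1}{\beta-1}}$. Write $X(s)=\int_s^\infty x^{1-\gamma}dx$, $Y(s)=\int_s^\infty y^{1-\beta}dy$, $\bar X=X(x_0)=\frac{x_0^{2-\gamma}}{\gamma-2}$, $\bar Y=Y(y_0)=\frac{y_0^{2-\beta}}{\beta-2}$, $T_0=\bar X\bar Y$. If consumers of types $\ge x_t$ and CPs of types $\ge y_t$ participate ($x_t\ge x_0$, $y_t\ge y_0$), total traffic is $T=\sqrt{T_0X(x_t)Y(y_t)}$ and network speed is $T_0/T$. A participating consumer of type $x$ gets utility $\phi\big(\int_{y_t}^\infty \frac{T_0}{T}x y^{1-\beta}dy\big)-c$, where $\phi$ is a nonnegative concave function and $c\ge 0$ is the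 membership fee; a participating CP of type $y$ gets utility $\lambda\int_{x_t}^\infty\frac{T_0}{T}x^{1-\gamma}y\,dx-by-ay$, where $\lambda>0$ is an exchange rate, $a\ge 0$ is the CP cost parameter and $b$ the CP fee. The ISP's revenue is $\mathcal R=c\int_{x_t}^\infty x^{-\gamma}dx+b\,Y(y_t)$. The ISP selects thresholds and charges the prices at which the threshold types are exactly indifferent (utility $0$); here with $c=0$ this means $x_t=x_0$ and $b=\lambda\int_{x_0}^\infty\frac{T_0}{T}x^{1-\gamma}dx-a$, and the optimal $b$ is the one corresponding to the revenue-maximizing $y_t\ge y_0$. *)

From Stdlib Require Import Reals.
From Coquelicot Require Import Coquelicot.
Open Scope R_scope.

Definition Int_from (f : R -> R) (s : R) : R :=
  RInt_gen f (at_point s) (Rbar_locally p_infty).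

(* lower ends of the type supports *)
Definition x0 (gam : R) : R := Rpower (1 / (gam - 1)) (1 / (gam - 1)).
Definition y0 (bet : R) : R := Rpower (1 / (bet - 1)) (1 / (bet - 1)).

Definition Xf (gam s : R) : R := Int_from (fun x => Rpower x (1 - gam)) s.
Definition Yf (bet s : R) : R := Int_from (fun y => Rpower y (1 - bet)) s.

Definition Xbar (gam : R) : R := Xf gam (x0 gam).
Definition Ybar (bet : R) : R := Yf bet (y0 bet).
Definition T0 (gam bet : R) : R := Xbar gam * Ybar bet.

Definition traffic (gam bet xt yt : R) : R :=
  sqrt (T0 gam bet * Xf gam xt * Yf bet yt).
Definition speed (gam bet xt yt : R) : R := T0 gam bet / traffic gam bet xt yt.

Definition cp_utility (gam bet lam a b xt yt y : R) : R :=
  lam * Int_from (fun x => speed gam bet xt yt * Rpower x (1 - gam) * y) xt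
  - b * y - a * y.

(* CP fee making the threshold CP type indifferent, when c = 0 and xt = x0:
   b = lam * int_{x0}^oo (T0/T) x^(1-gamma) dx - a *)
Definition cp_fee (gam bet lam a yt : R) : R :=
  lam * Int_from (fun x => speed gam bet (x0 gam) yt * Rpower x (1 - gam)) (x0 gam)
  - a.

Definition revenue (gam bet c b xt yt : R) : R :=
  c * Int_from (fun x => Rpower x (- gam)) xt + b * Yf bet yt.

Definition revenue0 (gam bet lam a yt : R) : R :=
  revenue gam bet 0 (cp_fee gam bet lam a yt) (x0 gam) yt.

From Stdlib Require Import Reals Lra.
From Coquelicot Require Import Coquelicot.
Open Scope R_scope.

(* With c = 0 every integral in the model is a power integral
   int_s^oo x^(1-k) dx = s^(2-k)/(k-2).  In the variable u = sqrt(Y(y_t)),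
   which runs over (0, sqrt(Ybar)] as y_t runs over [y_0, oo), the indifference
   fee is b = C/u - a and the revenue is b u^2 = C u - a u^2, where
   C = lam Xbar sqrt(Ybar).  This concave quadratic has a unique maximiser on
   (0, sqrt(Ybar)]: the right end point when 2 a sqrt(Ybar) <= C, where
   b = lam Xbar - a, and the vertex u = C/(2a) otherwise, where b = a. *)

Lemma Rpower_pos x e : 0 < Rpower x e.
Proof. apply exp_pos. Qed.

Lemma Rlt_Rpower_l_neg e x y : e < 0 -> 0 < x -> x < y -> Rpower y e < Rpower x e.
Proof.
  intros He Hx Hxy. apply exp_increasing.
  assert (ln x < ln y) by (apply ln_increasing; lra). nra.
Qed.

Lemma is_lim_Rpower_p_infty e : e < 0 ->
  filterlim (fun x => Rpower x e) (Rbar_locally p_infty) (locally 0).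
Proof.
  intros He.
  apply (is_lim_comp exp (fun x => e * ln x) p_infty 0 m_infty).
  - exact is_lim_exp_m.
  - assert (Hlim := is_lim_scal_l ln e p_infty p_infty is_lim_ln_p).
    simpl in Hlim; unfold is_Rbar_mult, Rbar_mult' in Hlim.
    destruct (Rle_dec 0 e); [lra | exact Hlim].
  - exists 0; discriminate.
Qed.

Lemma filter_prod_at_point_p_infty s (P : R * R -> Prop) :
  (forall t, s < t -> P (s, t)) ->
  filter_prod (at_point s) (Rbar_locally p_infty) P.
Proof.
  intros HP.
  apply (Filter_prod _ _ _ (fun x => x = s) (fun t => s < t)).
  - reflexivity.
  - exists s; intros; lra.
  - intros x t -> Ht; exact (HP t Ht).
Qed.

Lemma is_derive_Rpower_primitive e x : e <> -1 -> 0 < x ->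
  is_derive (fun t => Rpower t (e + 1) / (e + 1)) x (Rpower x e).
Proof.
  intros He Hx. apply is_derive_Reals.
  replace (Rpower x e) with ((e + 1) * Rpower x (e + 1 - 1) / (e + 1))
    by (replace (e + 1 - 1) with e by ring; field; lra).
  apply derivable_pt_lim_scal_right, derivable_pt_lim_power, Hx.
Qed.

Lemma is_RInt_gen_Rpower_p_infty e s : e < -1 -> 0 < s ->
  is_RInt_gen (fun x => Rpower x e) (at_point s) (Rbar_locally p_infty)
    (- Rpower s (e + 1) / (e + 1)).
Proof.
  intros He Hs.
  set (F := fun t => Rpower t (e + 1) / (e + 1)).
  assert (HF : forall x, 0 < x -> is_derive F x (Rpower x e))
    by (intros x Hx; apply is_derive_Rpower_primitive; lra).
  assert (Hbetween : forall P : R -> Prop, (forall x, 0 < x -> P x) ->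
    filter_prod (at_point s) (Rbar_locally p_infty)
      (fun ab => forall x, Rmin (fst ab) (snd ab) <= x <= Rmax (fst ab) (snd ab) -> P x)).
  { intros P HP. apply filter_prod_at_point_p_infty. intros t Ht x.
    simpl. rewrite Rmin_left by lra. intros [Hx _]. apply HP; lra. }
  apply (is_RInt_gen_ext (Derive F)).
  { apply filter_prod_at_point_p_infty. intros t Ht x.
    simpl. rewrite Rmin_left by lra. intros [Hx _].
    apply is_derive_unique, HF; lra. }
  replace (- Rpower s (e + 1) / (e + 1)) with (0 - F s) by (unfold F; field; lra).
  apply is_RInt_gen_Derive.
  - apply Hbetween. intros x Hx. eexists. apply HF, Hx.
  - apply Hbetween. intros x Hx.
    apply (continuous_ext_loc _ (fun t => Rpower t e)).
    + apply (filter_imp (fun t => 0 < t)); [|exact (open_gt 0 x Hx)].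
      intros t Ht. symmetry. apply is_derive_unique, HF, Ht.
    + apply (ex_derive_continuous (fun t => Rpower t e)). eexists.
      apply is_derive_Reals, (derivable_pt_lim_power x e Hx).
  - intros P HP. exact (locally_singleton _ _ HP).
  - assert (Hlim := is_lim_scal_r _ (/ (e + 1)) p_infty 0
                      (is_lim_Rpower_p_infty (e + 1) ltac:(lra))).
    simpl in Hlim. rewrite Rmult_0_l in Hlim. exact Hlim.
Qed.

Lemma Int_from_Rpower e s : e < -1 -> 0 < s ->
  Int_from (fun x => Rpower x e) s = - Rpower s (e + 1) / (e + 1).
Proof.
  intros He Hs. apply is_RInt_gen_unique, is_RInt_gen_Rpower_p_infty; assumption.
Qed.

Lemma Int_from_scal_Rpower c e s : e < -1 -> 0 < s ->
  Int_from (fun x => c * Rpower x e) s = c * (- Rpower s (e + 1) / (e + 1)).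
Proof.
  intros He Hs. apply is_RInt_gen_unique.
  apply (is_RInt_gen_scal (fun x => Rpower x e)), is_RInt_gen_Rpower_p_infty; assumption.
Qed.

Section ConcaveQuadratic.

Variables C a U : R.
Hypotheses (HC : 0 < C) (Ha : 0 <= a) (HU : 0 < U).

Definition clamped_vertex : R := if Rle_dec (2 * a * U) C then U else C / (2 * a).

Lemma clamped_vertex_range : 0 < clamped_vertex <= U.
Proof.
  unfold clamped_vertex. destruct (Rle_dec (2 * a * U) C) as [Hle | Hgt]; [lra |].
  assert (Hap : 0 < a) by nra.
  split; [apply Rdiv_lt_0_compat; lra |].
  apply Rmult_le_reg_r with (2 * a); [lra |]. field_simplify; lra.
Qed.

Lemma quad_le_clamped_vertex u : 0 < u <= U ->
  C * u - a * u * u <= C * clamped_vertex - a * clamped_vertex * clamped_vertex.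
Proof.
  intros Hu. unfold clamped_vertex.
  destruct (Rle_dec (2 * a * U) C) as [Hle | Hgt].
  - (* (C U - a U^2) - (C u - a u^2) = (U - u) (C - 2 a U) + a (U - u)^2 *)
    assert (0 <= (U - u) * (C - 2 * a * U)) by (apply Rmult_le_pos; lra).
    assert (0 <= a * ((U - u) * (U - u))) by (apply Rmult_le_pos; [lra | apply Rle_0_sqr]).
    nra.
  - assert (Hap : 0 < a) by nra.
    assert (0 <= a * ((u - C / (2 * a)) * (u - C / (2 * a))))
      by (apply Rmult_le_pos; [lra | apply Rle_0_sqr]).
    replace (C * (C / (2 * a)) - a * (C / (2 * a)) * (C / (2 * a)))
      with (C * u - a * u * u + a * ((u - C / (2 * a)) * (u - C / (2 * a))))
      by (field; lra).
    lra.
Qed.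

Lemma quad_clamped_vertex_unique u :
  0 < u <= U ->
  C * clamped_vertex - a * clamped_vertex * clamped_vertex <= C * u - a * u * u ->
  u = clamped_vertex.
Proof.
  intros Hu Hq. unfold clamped_vertex in *.
  destruct (Rle_dec (2 * a * U) C) as [Hle | Hgt].
  - destruct (Req_dec u U) as [| Hne]; [assumption | exfalso].
    assert (Hpos : 0 < C - 2 * a * U + a * (U - u))
      by (destruct Ha as [Hap | <-]; [nra | lra]).
    assert (0 < (U - u) * (C - 2 * a * U + a * (U - u)))
      by (apply Rmult_lt_0_compat; lra).
    nra.
  - assert (Hap : 0 < a) by nra.
    set (w := C / (2 * a)) in *.
    assert (Hw : C = 2 * a * w) by (unfold w; field; lra).
    rewrite Hw in Hq.
    assert (Hsq : a * ((u - w) * (u - w)) <= 0) by lra.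
    apply Rminus_diag_uniq, Rsqr_0_uniq. unfold Rsqr.
    apply Rle_antisym; [| apply Rle_0_sqr].
    apply Rmult_le_reg_l with a; lra.
Qed.

End ConcaveQuadratic.

Lemma x0_pos gam : 0 < x0 gam.
Proof. apply Rpower_pos. Qed.

Lemma y0_pos bet : 0 < y0 bet.
Proof. apply Rpower_pos. Qed.

Lemma Xf_eq gam s : 2 < gam -> 0 < s -> Xf gam s = Rpower s (2 - gam) / (gam - 2).
Proof.
  intros Hg Hs. unfold Xf. rewrite Int_from_Rpower by lra.
  replace (1 - gam + 1) with (2 - gam) by ring. field; lra.
Qed.

Lemma Yf_eq bet s : 2 < bet -> 0 < s -> Yf bet s = Rpower s (2 - bet) / (bet - 2).
Proof. unfold Yf. fold (Xf bet s). apply Xf_eq. Qed.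

Lemma Xbar_eq gam : 2 < gam -> Xbar gam = Rpower (x0 gam) (2 - gam) / (gam - 2).
Proof. intros Hg. unfold Xbar. apply Xf_eq, x0_pos; assumption. Qed.

Lemma Xbar_pos gam : 2 < gam -> 0 < Xbar gam.
Proof.
  intros Hg. rewrite Xbar_eq by assumption.
  apply Rdiv_lt_0_compat; [apply Rpower_pos | lra].
Qed.

Lemma Yf_pos bet y : 2 < bet -> 0 < y -> 0 < Yf bet y.
Proof.
  intros Hb Hy. rewrite Yf_eq by assumption.
  apply Rdiv_lt_0_compat; [apply Rpower_pos | lra].
Qed.

Lemma sqrt_Ybar_pos bet : 2 < bet -> 0 < sqrt (Ybar bet).
Proof. intros Hb. apply sqrt_lt_R0. unfold Ybar. apply Yf_pos, y0_pos; assumption. Qed.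

Lemma Yf_decreasing bet y1 y2 : 2 < bet -> 0 < y1 -> y1 < y2 -> Yf bet y2 < Yf bet y1.
Proof.
  intros Hb Hy1 Hy12. rewrite !Yf_eq by lra.
  apply Rmult_lt_compat_r; [apply Rinv_0_lt_compat; lra |].
  apply Rlt_Rpower_l_neg; lra.
Qed.

Lemma Yf_surjective bet v : 2 < bet -> 0 < v -> exists y, 0 < y /\ Yf bet y = v.
Proof.
  intros Hb Hv. exists (Rpower ((bet - 2) * v) (/ (2 - bet))).
  split; [apply Rpower_pos |].
  rewrite Yf_eq, Rpower_mult by (assumption || apply Rpower_pos).
  rewrite Rinv_l, Rpower_1 by nra. field; lra.
Qed.

Lemma sqrt_Yf_range bet y : 2 < bet -> y0 bet <= y ->
  0 < sqrt (Yf bet y) <= sqrt (Ybar bet).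
Proof.
  intros Hb Hy. assert (H0 := y0_pos bet). split.
  - apply sqrt_lt_R0, Yf_pos; lra.
  - apply sqrt_le_1_alt. destruct Hy as [Hlt | <-]; [| apply Rle_refl].
    apply Rlt_le, Yf_decreasing; assumption.
Qed.

Lemma sqrt_Yf_onto bet v : 2 < bet -> 0 < v <= sqrt (Ybar bet) ->
  exists y, y0 bet <= y /\ sqrt (Yf bet y) = v.
Proof.
  intros Hb [Hv HvU]. destruct (Yf_surjective bet (v * v) Hb) as [y [Hy Hyv]]; [nra |].
  exists y. split.
  - destruct (Rle_or_lt (y0 bet) y) as [| Hlt]; [assumption | exfalso].
    assert (Hgt := Yf_decreasing bet y (y0 bet) Hb Hy Hlt).
    assert (HU := sqrt_sqrt (Ybar bet) (Rlt_le _ _ (Yf_pos bet _ Hb (y0_pos bet)))).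
    fold (Ybar bet) in Hgt. nra.
  - rewrite Hyv. apply sqrt_square; lra.
Qed.

Lemma speed_x0_eq gam bet y : 2 < gam -> 2 < bet -> 0 < y ->
  speed gam bet (x0 gam) y = sqrt (Ybar bet) / sqrt (Yf bet y).
Proof.
  intros Hg Hb Hy. unfold speed, traffic, T0. fold (Xbar gam).
  assert (HX := Xbar_pos gam Hg).
  assert (HY := Yf_pos bet y Hb Hy).
  assert (HY0 := Yf_pos bet (y0 bet) Hb (y0_pos bet)). fold (Ybar bet) in HY0.
  replace (Xbar gam * Ybar bet * Xbar gam * Yf bet y)
    with ((Xbar gam * Xbar gam) * (Ybar bet * Yf bet y)) by ring.
  rewrite sqrt_mult_alt, sqrt_square, sqrt_mult_alt by nra.
  assert (HsY := sqrt_lt_R0 _ HY). assert (HsY0 := sqrt_lt_R0 _ HY0).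
  rewrite <- (sqrt_sqrt (Ybar bet)) at 1 by lra.
  field; lra.
Qed.

Lemma cp_fee_eq gam bet lam a y : 2 < gam -> 2 < bet -> 0 < y ->
  cp_fee gam bet lam a y = lam * Xbar gam * sqrt (Ybar bet) / sqrt (Yf bet y) - a.
Proof.
  intros Hg Hb Hy. unfold cp_fee.
  rewrite Int_from_scal_Rpower, speed_x0_eq by (try apply x0_pos; lra).
  rewrite (Xbar_eq gam Hg). replace (1 - gam + 1) with (2 - gam) by ring.
  assert (HsY : 0 < sqrt (Yf bet y)) by (apply sqrt_lt_R0, Yf_pos; assumption).
  field; lra.
Qed.

Lemma revenue0_eq gam bet lam a y : 2 < gam -> 2 < bet -> 0 < y ->
  revenue0 gam bet lam a y =
  lam * Xbar gam * sqrt (Ybar bet) * sqrt (Yf bet y) - a * sqrt (Yf bet y) * sqrt (Yf bet y).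
Proof.
  intros Hg Hb Hy. unfold revenue0, revenue. rewrite cp_fee_eq by assumption.
  assert (HY := Yf_pos bet y Hb Hy). assert (HsY := sqrt_lt_R0 _ HY).
  rewrite <- (sqrt_sqrt (Yf bet y)) at 2 by lra.
  field. lra.
Qed.

Section OptimalThreshold.

Variables gam bet lam a : R.
Hypotheses (Hg : 2 < gam) (Hb : 2 < bet) (Hl : 0 < lam) (Ha : 0 <= a).

Let U := sqrt (Ybar bet).
Let C := lam * Xbar gam * U.

Let U_pos : 0 < U.
Proof. exact (sqrt_Ybar_pos bet Hb). Qed.

Let C_pos : 0 < C.
Proof.
  assert (HX := Xbar_pos gam Hg). unfold C.
  apply Rmult_lt_0_compat; [apply Rmult_lt_0_compat |]; [assumption .. | exact U_pos].
Qed.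

Let revenue0_quadratic y : y0 bet <= y ->
  revenue0 gam bet lam a y = C * sqrt (Yf bet y) - a * sqrt (Yf bet y) * sqrt (Yf bet y).
Proof. intros Hy. apply revenue0_eq; [assumption .. |]. assert (H0 := y0_pos bet). lra. Qed.

Lemma revenue0_max_exists : exists ym, y0 bet <= ym /\
  sqrt (Yf bet ym) = clamped_vertex C a U /\
  forall y, y0 bet <= y -> revenue0 gam bet lam a y <= revenue0 gam bet lam a ym.
Proof.
  destruct (sqrt_Yf_onto bet (clamped_vertex C a U) Hb (clamped_vertex_range C a U C_pos U_pos))
    as [ym [Hym Hum]].
  exists ym. repeat split; [assumption .. |]. intros y Hy.
  rewrite !revenue0_quadratic, Hum by assumption.
  apply quad_le_clamped_vertex, sqrt_Yf_range; assumption.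
Qed.

Lemma revenue0_argmax_sqrt_Yf yt : y0 bet <= yt ->
  (forall y, y0 bet <= y -> revenue0 gam bet lam a y <= revenue0 gam bet lam a yt) ->
  sqrt (Yf bet yt) = clamped_vertex C a U.
Proof.
  intros Hyt Hopt. destruct revenue0_max_exists as [ym [Hym [Hum _]]].
  apply quad_clamped_vertex_unique; [exact C_pos | assumption | apply sqrt_Yf_range; assumption |].
  assert (Hq := Hopt ym Hym). rewrite !revenue0_quadratic, Hum in Hq by assumption. exact Hq.
Qed.

Lemma cp_fee_at_argmax yt : y0 bet <= yt ->
  sqrt (Yf bet yt) = clamped_vertex C a U ->
  (lam / 2 * Xbar gam < a -> cp_fee gam bet lam a yt = a) /\
  (a <= lam / 2 * Xbar gam -> cp_fee gam bet lam a yt = lam * Xbar gam - a).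
Proof.
  intros Hyt Hut. rewrite cp_fee_eq, Hut by (assumption || (assert (H0 := y0_pos bet); lra)).
  fold U C. assert (HU := U_pos). assert (HX := Xbar_pos gam Hg). unfold clamped_vertex, C.
  destruct (Rle_dec (2 * a * U) (lam * Xbar gam * U)) as [Hle | Hgt];
    split; intros Hcase; try (exfalso; nra).
  - field. lra.
  - assert (0 < a) by nra. field. lra.
Qed.

End OptimalThreshold.

Theorem theorem1 (gam bet lam a : R) :
  2 < gam -> 2 < bet -> 0 < lam -> 0 <= a ->
  (* a revenue-maximizing CP threshold exists *)
  (exists yt, y0 bet <= yt /\
     forall y, y0 bet <= y -> revenue0 gam bet lam a y <= revenue0 gam bet lam a yt) /\
  (* and for every revenue-maximizing threshold, the corresponding fee is b_opt *)
  (forall yt, y0 bet <= yt ->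
     (forall y, y0 bet <= y -> revenue0 gam bet lam a y <= revenue0 gam bet lam a yt) ->
     (lam / 2 * (Rpower (x0 gam) (2 - gam) / (gam - 2)) < a ->
        cp_fee gam bet lam a yt = a) /\
     (a <= lam / 2 * (Rpower (x0 gam) (2 - gam) / (gam - 2)) ->
        cp_fee gam bet lam a yt = lam / (gam - 2) * Rpower (x0 gam) (2 - gam) - a)).
Proof.
  intros Hg Hb Hl Ha.
  replace (lam / (gam - 2) * Rpower (x0 gam) (2 - gam)) with (lam * Xbar gam)
    by (rewrite Xbar_eq by assumption; field; lra).
  rewrite <- (Xbar_eq gam Hg).
  split.
  - destruct (revenue0_max_exists gam bet lam a Hg Hb Hl Ha) as [ym [Hym [_ Hmax]]].
    exists ym. split; assumption.
  - intros yt Hyt Hopt.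
    apply cp_fee_at_argmax; [assumption .. |].
    apply revenue0_argmax_sqrt_Yf; assumption.
Qed.
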